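(* For the coprime hider strategy $y$, consider two disjoint intervals $[u\oplus\ell]_{n-1}$ and $[v\oplus s]_{n-1}$ (with $u,v,\ell,s$ nonnegative integers) such that $\ell+s\le c$. Then $$y([u\oplus\ell]_{n-1})+y([v\oplus s]_{n-1})\le y([u\oplus(\ell+s+1)]_{n-1}).$$
   Context: Let $k\ge2$, $n>2^k$, $c=2^k-2$ with $\gcd(c,n-1)=1$, and let $h,w$ be the positive integers with $h(n-1)-wc=1$ and $w\in\{1,\dots,n-2\}$ minimal. For integers $u,\ell$ and $r\ge1$, $[u\oplus\ell]_r=\{w\bmod r: u\le w\le u+\ell-1\}$; $[a,b]=\{a,\dots,b\}$; $y(S)=\sum_{i\in S}y_i$. Coprime hider strategy $y\in\mathbb{R}^{\{0,\dots,n-1\}}$: $g(v)=v\frac{h}{wc}$, $r=\lfloor c/h\rfloor$; $y_0=y_{n-1}=0$; starting at $v=1$, repeatedly choose the largest $r^*\in\{r,r+1\}$ with $g(v+r^*-1)\le y([1,v-1])+\frac1w$, set $y_i=\frac{1}{r^*w}$ for $i\in\{v,\dots,v+r^*-1\}$, replace $v$ by $v+r^*$; stop when $v>n-2$. *)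

From mathcomp Require Import all_boot all_order all_algebra.
Set Implicit Arguments. Unset Strict Implicit. Unset Printing Implicit Defensive.
Import Order.TTheory GRing.Theory Num.Theory.
Local Open Scope ring_scope.

Definition cval (k : nat) : nat := (2 ^ k - 2)%N .

Section Hider.
Variables (R : realFieldType) (n k h w : nat).

Definition gfun (v : nat) : R := v%:R * h%:R / (w%:R * (cval k)%:R).

Definition rval : nat := (cval k %/ h)%N .

(* State: current start v and the current
   value S = y([1, v-1]).  Stops when v > n - 2.
   Fuel n suffices since r >= 1 under the standing hypotheses. *)
Fixpoint blocks (fuel v : nat) (S : R) : seq (nat * nat) :=
  match fuel with
  | 0 => [::]
  | fuel'.+1 =>
      if (n - 2 < v)%N then [::]
      else
        let rs := if gfun (v + rval.+1 - 1) <= S + 1 / w%:R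
                  then rval.+1 else rval in
        (v, rs) :: blocks fuel' (v + rs)
                     (S + \sum_(v <= i < v + rs) (1 / (rs%:R * w%:R)))
  end.

Definition hider_blocks : seq (nat * nat) := blocks n 1 0.

Definition value_of_blocks (bs : seq (nat * nat)) (i : nat) : R :=
  foldr (fun b acc => if (b.1 <= i < b.1 + b.2)%N
                      then 1 / (b.2%:R * w%:R) else acc) 0 bs.

Definition hider (i : nat) : R :=
  if (1 <= i <= n - 2)%N then value_of_blocks hider_blocks i else 0.

End Hider.

(* [u (+) l]_r = { x mod r : u <= x <= u + l - 1 }, as a finite set of 'I_r. *)
Definition cyc_interval (r u l : nat) : {set 'I_r} :=
  [set i : 'I_r | has (fun x => x %% r == nat_of_ord i)%N (iota u l)].

Definition ysum (R : realFieldType) (r : nat) (y : nat -> R) (S : {set 'I_r}) : R :=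
  \sum_(i in S) y (nat_of_ord i).

(* The greedy construction puts its j-th block exactly on (bnd j, bnd j.+1],
   bnd j = floor (j c / h), and gives each block total weight 1/w.  Hence
   w y([1, z]) = mass z, the piecewise-linear interpolation of the inverse of
   bnd.  As bnd is superadditive up to an error of 1, mass is subadditive and
   mass t + mass u <= mass (t + u + 1).  The Bezout identity w c + 1 = h (n-1)
   makes the weights symmetric under x |-> n - 1 - x, which carries both
   inequalities over to cyclic windows: a window of length s weighs at most
   mass s / w and one of length s + 1 at least as much.  Splitting
   [u (+) (l+s+1)] into [u (+) l] and a window of length s + 1 proves the claim. *)

From mathcomp Require Import all_boot all_order all_algebra.
From mathcomp Require Import zify ring lra.
Set Implicit Arguments. Unset Strict Implicit. Unset Printing Implicit Defensive.
Import Order.TTheory GRing.Theory Num.Theory.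

Section BlockBoundaries.
Variables c h : nat.
Hypothesis h_gt0 : 0 < h.

(* Block j of the hider is (bnd j, bnd j.+1]; block_of x is the block of x. *)
Definition bnd j := j * c %/ h.
Definition blen j := bnd j.+1 - bnd j.
Definition block_of x := (x * h).-1 %/ c.

Lemma bnd0 : bnd 0 = 0.
Proof. by rewrite /bnd mul0n div0n. Qed.

Lemma leq_bnd K x : (x <= bnd K) = (x * h <= K * c).
Proof. by rewrite /bnd leq_divRL. Qed.

Lemma bnd_mono : {homo bnd : a b / a <= b}.
Proof. by move=> a b ab; rewrite /bnd leq_div2r // leq_mul2r ab orbT. Qed.

Lemma bndD_bounds a b : bnd a + bnd b <= bnd (a + b) <= (bnd a + bnd b).+1.
Proof.
rewrite /bnd mulnDl (divnD _ _ h_gt0).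
by case: (h <= _); rewrite ?addn0 ?addn1 ?leq_addr ?leqnn ?leqnSn.
Qed.

Lemma blen_bounds j : c %/ h <= blen j <= (c %/ h).+1.
Proof.
have := bndD_bounds j 1; rewrite addn1 /blen /bnd mul1n.
move: (j * c %/ h) (j.+1 * c %/ h) (c %/ h) => a b r; lia.
Qed.

Lemma bnd_compl w N j : (w * c).+1 = h * N -> j <= w -> bnd (w - j) + bnd j = N.-1.
Proof.
move=> bezout j_le_w; rewrite /bnd; set q := j * c %/ h; set r := j * c %% h.
have def_jc : j * c = q * h + r by apply: divn_eq.
have r_lt_h : r < h by apply: ltn_pmod.
have jc_le_wc : j * c <= w * c by rewrite leq_mul2r j_le_w orbT.
have q_lt_N : q < N.
  rewrite -(ltn_pmul2r h_gt0) [N * h]mulnC -bezout ltnS.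
  by rewrite (leq_trans _ jc_le_wc) // def_jc leq_addr.
suff -> : (w - j) * c = (N.-1 - q) * h + (h.-1 - r).
  by rewrite divnMDl // divn_small; lia.
have N_gt0 : 0 < N := leq_ltn_trans (leq0n q) q_lt_N.
have Nh : N.-1 * h + h = h * N by rewrite -mulSnr prednK // mulnC.
have qh_le : q * h + h <= h * N by rewrite -mulSnr mulnC leq_mul2l q_lt_N orbT.
rewrite !mulnBl; move: Nh qh_le bezout def_jc jc_le_wc.
by move: (j * c) (w * c) (q * h) (N.-1 * h) (h * N) => jc wc qh Nh1 hN; lia.
Qed.

Lemma bnd_full w N : (w * c).+1 = h * N -> bnd w = N.-1.
Proof. by move=> bezout; have := bnd_compl bezout (leq0n w); rewrite subn0 bnd0 addn0. Qed.

Hypothesis h_le_c : h <= c.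

Lemma blen_gt0 j : 0 < blen j.
Proof.
have := blen_bounds j; have : 0 < c %/ h by rewrite divn_gt0.
move: (blen j) (c %/ h) => a b; lia.
Qed.

Lemma bnd_ltS K : bnd K < bnd K.+1.
Proof. by have := blen_gt0 K; rewrite /blen subn_gt0. Qed.

Lemma leq_bnd_self K : K <= bnd K.
Proof. by rewrite leq_bnd leq_mul2l h_le_c orbT. Qed.

Lemma block_ofP K x : bnd K < x <= bnd K.+1 -> block_of x = K.
Proof.
have c_gt0 : 0 < c by apply: leq_trans h_le_c.
rewrite /bnd ltn_divLR // leq_divRL // => /andP[lo hi].
apply/eqP; rewrite eqn_leq -ltnS ltn_divLR // leq_divRL // mulSn.
by move: lo hi; rewrite mulSn; move: (x * h) (K * c) => a b; lia.
Qed.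

Lemma exists_block m z : 0 < m -> z <= bnd m ->
  exists2 K, K < m & bnd K <= z <= bnd K.+1.
Proof.
elim: m => [//|m IH] _ hz.
case: (posnP m) hz => [->|m_gt0] hz; first by exists 0; rewrite ?bnd0.
have [/(IH m_gt0)[K Km hK]|hmz] := leqP z (bnd m); first by exists K => //; apply: ltnW.
by exists m; rewrite // (ltnW hmz).
Qed.

End BlockBoundaries.

Section Mass.
Variables (R : realFieldType) (c h : nat).
Hypotheses (h_gt0 : (0 < h)%N) (h_le_c : (h <= c)%N).
Local Open Scope ring_scope.
Local Notation bnd := (bnd c h).
Local Notation blen := (blen c h).

(* wt x / w is the hider's weight at x, so mass z / w is y([1, z]). *)
Definition wt x : R := (blen (block_of c h x))%:R^-1.
Definition mass z : R := \sum_(0 <= i < z) wt i.+1.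
Definition block_point K (t : R) : R := (bnd K)%:R + t * (blen K)%:R.

Lemma wt_ge0 x : 0 <= wt x.
Proof. by rewrite invr_ge0 ler0n. Qed.

Lemma natr_blen K : (blen K)%:R = (bnd K.+1)%:R - (bnd K)%:R :> R.
Proof. by rewrite -natrB // bnd_mono. Qed.

Lemma natr_blen_neq0 K : (blen K)%:R != 0 :> R.
Proof. by rewrite pnatr_eq0 -lt0n blen_gt0. Qed.

Lemma mass_mono : {homo mass : z z' / (z <= z')%N >-> z <= z'}.
Proof.
move=> z z' le_zz'; rewrite /mass (big_cat_nat (leq0n z) le_zz') /= lerDl.
by apply: sumr_ge0 => i _; apply: wt_ge0.
Qed.

Lemma mass_in_block_split K z : (bnd K <= z <= bnd K.+1)%N ->
  mass z = mass (bnd K) + (z - bnd K)%:R / (blen K)%:R.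
Proof.
case/andP=> lo hi; rewrite /mass (big_cat_nat (leq0n _) lo) //=; congr (_ + _).
rewrite mulr_natl -sumr_const_nat; apply: eq_big_nat => i /andP[lo_i hi_i].
by rewrite /wt (@block_ofP _ _ h_gt0 h_le_c K) // ltnS lo_i (leq_trans hi_i hi).
Qed.

Lemma mass_bnd K : mass (bnd K) = K%:R.
Proof.
elim: K => [|K IH]; first by rewrite bnd0 /mass big_geq.
rewrite (@mass_in_block_split K (bnd K.+1)) ?leqnn ?andbT ?bnd_mono // IH -/(blen K).
by rewrite divff ?natr_blen_neq0 // natr1.
Qed.

Lemma mass_in_block K z : (bnd K <= z <= bnd K.+1)%N ->
  mass z = K%:R + (z - bnd K)%:R / (blen K)%:R.
Proof. by move=> hz; rewrite (mass_in_block_split hz) mass_bnd. Qed.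

Lemma mass_le K t z : 0 <= t <= 1 -> z%:R <= block_point K t -> mass z <= K%:R + t.
Proof.
case/andP=> t_ge0 t_le1 hz; have [z_le|bnd_lt] := leqP z (bnd K).
  by rewrite -mass_bnd (le_trans (mass_mono z_le)) // lerDl.
have z_le : (z <= bnd K.+1)%N.
  rewrite -(ler_nat R); apply: le_trans hz _; rewrite /block_point natr_blen.
  have := ler_nat R (bnd K) (bnd K.+1); rewrite bnd_mono //; nra.
rewrite (@mass_in_block K) ?(ltnW bnd_lt) // lerD2l natrB ?(ltnW bnd_lt) //.
rewrite ler_pdivrMr ?ltr0n ?blen_gt0 //; move: hz; rewrite /block_point; lra.
Qed.

Lemma mass_ge K t z : 0 <= t <= 1 -> block_point K t <= z%:R -> K%:R + t <= mass z.
Proof.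
case/andP=> t_ge0 t_le1 hz; have [bnd_le|z_lt] := leqP (bnd K.+1) z.
  by rewrite (le_trans _ (mass_mono bnd_le)) // mass_bnd -natr1 lerD2l.
have bnd_le : (bnd K <= z)%N.
  rewrite -(ler_nat R); apply: le_trans hz; rewrite /block_point lerDl.
  by rewrite mulr_ge0 ?ler0n.
rewrite (@mass_in_block K) ?bnd_le ?(ltnW z_lt) // lerD2l natrB //.
rewrite ler_pdivlMr ?ltr0n ?blen_gt0 //; move: hz; rewrite /block_point; lra.
Qed.

Lemma mass_block_point K t z : 0 <= t <= 1 -> z%:R = block_point K t ->
  mass z = K%:R + t.
Proof. by move=> t01 hz; apply/le_anti; rewrite mass_le ?mass_ge ?hz. Qed.

Lemma block_pointP m z : (0 < m)%N -> (z <= bnd m)%N ->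
  exists K t, [/\ (K < m)%N, 0 <= t <= 1 & z%:R = block_point K t].
Proof.
move=> m_gt0 /(exists_block m_gt0)[K K_lt_m /andP[lo hi]].
have blen_gt0R : 0 < (blen K)%:R :> R by rewrite ltr0n blen_gt0.
exists K, ((z - bnd K)%:R / (blen K)%:R); split => //.
  by rewrite divr_ge0 ?ler0n //= ler_pdivrMr // mul1r ler_nat /blen leq_sub2r.
by rewrite /block_point divfK ?natr_blen_neq0 // natrB // addrC subrK.
Qed.

Lemma block_point_exists z : exists K t, 0 <= t <= 1 /\ z%:R = block_point K t.
Proof.
have z_le : (z <= bnd z.+1)%N by rewrite (leq_trans (leqnSn z)) ?leq_bnd_self.
by have [K [t [_ t01 hz]]] := block_pointP (ltn0Sn z) z_le; exists K, t.
Qed.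

Lemma block_point_add i j a b : 0 <= a <= 1 -> 0 <= b <= 1 ->
  exists K t, [/\ 0 <= t <= 1, K%:R + t = i%:R + a + (j%:R + b),
    block_point i a + block_point j b <= block_point K t
  & block_point K t <= block_point i a + block_point j b + 1].
Proof.
move=> /andP[a_ge0 a_le1] /andP[b_ge0 b_le1].
have bnd_addR p q : (bnd p)%:R + (bnd q)%:R <= (bnd (p + q))%:R :> R
                 /\ (bnd (p + q))%:R <= (bnd p)%:R + (bnd q)%:R + 1 :> R.
  by have /andP[lo hi] := bndD_bounds c h_gt0 p q; rewrite -natrD natr1 !ler_nat.
have [B1 B1'] := bnd_addR i j; have [B2 B2'] := bnd_addR i.+1 j.
have [B3 B3'] := bnd_addR i j.+1; have [B4 B4'] := bnd_addR i.+1 j.+1.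
rewrite addSn in B2 B2'; rewrite addnS in B3 B3'; rewrite addSn addnS in B4 B4'.
(* Split the left side as a combination of the corners with weights (1-a-b, a, b),
   or (a+b-1, 1-b, 1-a) after a carry, and compare corner by corner. *)
rewrite /block_point.
have [ab_le1|ab_gt1] := lerP (a + b) 1.
  exists (i + j)%N, (a + b); rewrite !natr_blen natrD.
  by split; [apply/andP; split | | |]; nra.
exists (i + j).+1, (a + b - 1); rewrite !natr_blen -natr1 natrD.
by split; [apply/andP; split | | |]; nra.
Qed.

Lemma mass_subadd t u : mass (t + u) <= mass t + mass u.
Proof.
have [i [a [a01 ht]]] := block_point_exists t.
have [j [b [b01 hu]]] := block_point_exists u.
have [K [s [s01 eK le_K _]]] := block_point_add i j a01 b01.
rewrite (mass_block_point a01 ht) (mass_block_point b01 hu) -eK.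
by apply: mass_le s01 _; rewrite natrD ht hu.
Qed.

Lemma mass_superadd t u : mass t + mass u <= mass (t + u + 1).
Proof.
have [i [a [a01 ht]]] := block_point_exists t.
have [j [b [b01 hu]]] := block_point_exists u.
have [K [s [s01 eK _ K_le]]] := block_point_add i j a01 b01.
rewrite (mass_block_point a01 ht) (mass_block_point b01 hu) -eK.
by apply: mass_ge s01 _; rewrite !natrD ht hu.
Qed.

End Mass.

Section Windows.
Variables (R : realFieldType) (N : nat) (y : nat -> R).
Local Open Scope ring_scope.

Definition window a l := \sum_(0 <= i < l) y ((a + i) %% N).

Lemma window_cat a l s : window a (l + s) = window a l + window (a + l) s.
Proof.
elim: s => [|s IH]; first by rewrite addn0 [window _ 0]big_geq ?addr0.
by rewrite addnS /window !big_nat_recr //= -!/(window _ _) IH addnA addrA.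
Qed.

Lemma ysum_cyc_interval u l : (0 < N)%N -> (l <= N)%N ->
  ysum y (cyc_interval N u l) = window u l.
Proof.
move=> N_gt0; elim: l => [|l IH] l_le.
  by rewrite /window big_geq // /ysum big_pred0 // => i; rewrite inE.
pose o := Ordinal (ltn_pmod (u + l) N_gt0).
have -> : cyc_interval N u l.+1 = o |: cyc_interval N u l.
  apply/setP => i; rewrite !inE -addn1 iotaD has_cat /= orbF orbC.
  by congr (_ || _); rewrite eq_sym; apply/eqP/eqP => [H|->] //; apply: val_inj.
rewrite /ysum big_setU1 /=; last first.
  rewrite inE; apply/hasPn => x; rewrite mem_iota => /andP[x1 x2].
  rewrite -(subnKC x1) eqn_modDl modn_small; last by move: x2 l_le; lia.
  by rewrite modn_small; move: x1 x2 l_le; lia.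
by rewrite -/(ysum _ _) IH ?(ltnW l_le) // /window big_nat_recr //= addrC.
Qed.

End Windows.

Section CyclicMass.
Variables (R : realFieldType) (c h w N : nat).
Hypotheses (h_gt0 : (0 < h)%N) (h_le_c : (h <= c)%N) (w_gt0 : (0 < w)%N).
Hypothesis bezout : (w * c).+1 = (h * N)%N.
Local Open Scope ring_scope.
Local Notation bnd := (bnd c h).
Local Notation mass := (mass R c h).

Lemma modulus_gt0 : (0 < N)%N.
Proof. by rewrite lt0n; apply: contraPneq bezout => ->; rewrite muln0. Qed.

Lemma mass_full : mass N.-1 = w%:R.
Proof. by rewrite -(bnd_full h_gt0 bezout) mass_bnd. Qed.

(* The reflection z |-> N.-1 - z maps block K onto block w - K.+1. *)
Lemma mass_compl z : (z <= N.-1)%N -> mass (N.-1 - z) = w%:R - mass z.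
Proof.
move=> z_le; have z_le_bnd : (z <= bnd w)%N by rewrite (bnd_full h_gt0 bezout).
have [K [t [K_lt_w t01 hz]]] := block_pointP R h_gt0 h_le_c w_gt0 z_le_bnd.
have /(congr1 (fun m => m%:R : R)) := bnd_compl h_gt0 bezout K_lt_w.
have /(congr1 (fun m => m%:R : R)) := bnd_compl h_gt0 bezout (ltnW K_lt_w).
rewrite !natrD => compl_K compl_SK.
rewrite (mass_block_point h_gt0 h_le_c t01 hz).
rewrite (@mass_block_point _ _ _ h_gt0 h_le_c (w - K.+1) (1 - t)).
- by rewrite natrB // -natr1; lra.
- by move: t01 => /andP[? ?]; apply/andP; split; lra.
- by rewrite natrB // hz /block_point !natr_blen subnSK //; nra.
Qed.

(* w times the total weight of [1, z] for the N-periodic extension of the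
   weights, with weight 0 at multiples of N; a full period weighs w. *)
Definition cmass z : R := (z %/ N)%:R * w%:R + mass (z %% N).

Lemma cmass_small z : (z < N)%N -> cmass z = mass z.
Proof. by move=> z_lt; rewrite /cmass divn_small // modn_small // mul0r add0r. Qed.

Lemma cmassMDl q z : cmass (q * N + z) = q%:R * w%:R + cmass z.
Proof. by rewrite /cmass divnMDl ?modulus_gt0 // modnMDl natrD mulrDl addrA. Qed.

Lemma cmass_wrap z : (z < N)%N -> cmass (N + z) = w%:R + mass z.
Proof. by move=> z_lt; rewrite -{1}[N]mul1n cmassMDl cmass_small // mul1r. Qed.

Lemma cmass_subadd a s : (s < N)%N -> cmass (a + s) <= cmass a + mass s.
Proof.
move=> s_lt; rewrite {1 2}(div.divn_eq a N) -addnA !cmassMDl -addrA lerD2l.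
have r_lt : (a %% N < N)%N by rewrite ltn_pmod ?modulus_gt0.
move: (a %% N)%N r_lt => r r_lt; rewrite (cmass_small r_lt).
have [rs_lt|rs_ge] := ltnP (r + s) N; first by rewrite cmass_small // mass_subadd.
rewrite -(subnKC rs_ge) cmass_wrap; last by move: r_lt s_lt; lia.
have := mass_superadd R h_gt0 h_le_c (r + s - N) (N.-1 - r).
rewrite mass_compl; last by move: r_lt; lia.
rewrite (_ : _ + _ + 1 = s)%N; first lra.
by move: r_lt rs_ge; lia.
Qed.

Lemma cmass_superadd a s : (s < N)%N -> cmass a + mass s <= cmass (a + s + 1).
Proof.
move=> s_lt; rewrite {1 2}(div.divn_eq a N) -!addnA !cmassMDl -addrA lerD2l addnA.
have r_lt : (a %% N < N)%N by rewrite ltn_pmod ?modulus_gt0.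
move: (a %% N)%N r_lt => r r_lt; rewrite (cmass_small r_lt).
have [rs_lt|rs_ge] := ltnP (r + s + 1) N; first by rewrite cmass_small // mass_superadd.
rewrite -(subnKC rs_ge) cmass_wrap; last by move: r_lt s_lt; lia.
have := mass_subadd R h_gt0 h_le_c (N.-1 - r) (r + s + 1 - N).
rewrite mass_compl; last by move: r_lt; lia.
rewrite (_ : _ + _ = s)%N; first lra.
by move: r_lt rs_ge; lia.
Qed.

Variable y : nat -> R.
Hypotheses (y0 : y 0%N = 0) (y_wt : forall x, (0 < x < N)%N -> y x = wt R c h x / w%:R).

Lemma cmassS z : cmass z.+1 = cmass z + w%:R * y (z.+1 %% N).
Proof.
have w_neq0 : w%:R != 0 :> R by rewrite pnatr_eq0 -lt0n.
have r_lt : (z %% N < N)%N by rewrite ltn_pmod ?modulus_gt0.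
rewrite (div.divn_eq z N) -addnS !cmassMDl modnMDl -addrA; congr (_ + _).
move: (z %% N)%N r_lt => r r_lt; rewrite (cmass_small r_lt).
have [rS_lt|] := ltnP r.+1 N.
  rewrite cmass_small // modn_small // y_wt // mulrC divfK //.
  by rewrite /mass big_nat_recr.
move=> N_le; have rS : r.+1 = N by apply/eqP; rewrite eqn_leq r_lt.
have -> : r = N.-1 by rewrite -rS.
rewrite prednK ?modulus_gt0 // modnn y0 mulr0 addr0 mass_full.
by rewrite -{1}[N]addn0 cmass_wrap ?modulus_gt0 // /mass big_geq ?addr0.
Qed.

Local Notation window := (window N y).

(* a + N.-1 is a - 1 modulo N, and need not be truncated at a = 0. *)
Lemma window_cmass a s :
  w%:R * window a s = cmass (a + N.-1 + s) - cmass (a + N.-1).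
Proof.
elim: s => [|s IH]; first by rewrite addn0 subrr /window big_geq ?mulr0.
rewrite /window big_nat_recr //= -/(window _ _) mulrDr IH addnS cmassS.
rewrite (_ : (a + N.-1 + s).+1 = a + s + N)%N ?modnDr; first lra.
by have := modulus_gt0; lia.
Qed.

Lemma window_le_mass a s : (s < N)%N -> window a s <= mass s / w%:R.
Proof.
move=> s_lt; rewrite ler_pdivlMr ?ltr0n // mulrC window_cmass lerBlDl.
exact: cmass_subadd.
Qed.

Lemma mass_le_window a s : (s < N)%N -> mass s / w%:R <= window a s.+1.
Proof.
move=> s_lt; rewrite ler_pdivrMr ?ltr0n // mulrC window_cmass lerBrDl.
by rewrite -addn1 addnA cmass_superadd.
Qed.

End CyclicMass.

Section Hider.
Variables (R : realFieldType) (n k h w : nat).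
Local Notation c := (cval k).
Hypotheses (h_gt0 : (0 < h)%N) (h_le_c : (h <= c)%N) (w_gt0 : (0 < w)%N).
Hypothesis bezout : (w * c).+1 = (h * (n - 1))%N.
Local Open Scope ring_scope.
Local Notation bnd := (bnd c h).
Local Notation blen := (blen c h).
Local Notation blocks := (@blocks R n k h w).

Lemma blocks_at_bnd fuel j : (j < w)%N ->
  blocks fuel.+1 (bnd j).+1 (j%:R / w%:R)
  = ((bnd j).+1, blen j) :: blocks fuel (bnd j.+1).+1 (j.+1%:R / w%:R).
Proof.
move=> j_lt_w /=.
have c_gt0 : (0 < c)%N by apply: leq_trans h_le_c.
have bnd_lt : (bnd j < bnd j.+1)%N := bnd_ltS h_gt0 h_le_c j.
have bnd_le : (bnd j.+1 <= n - 2)%N.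
  by have := bnd_mono c h j_lt_w; rewrite (bnd_full h_gt0 bezout); lia.
have w_neq0 : w%:R != 0 :> R by rewrite pnatr_eq0 -lt0n.
have c_neq0 : c%:R != 0 :> R by rewrite pnatr_eq0 -lt0n.
rewrite ltnNge (leq_trans bnd_lt bnd_le) /=.
have fits : (gfun R k h w ((bnd j).+1 + (rval k h).+1 - 1) <= j%:R / w%:R + 1 / w%:R)
            = (bnd j + (rval k h).+1 <= bnd j.+1)%N.
  have -> : j%:R / w%:R + 1 / w%:R = (j.+1 * c)%:R / (w%:R * c%:R) :> R.
    by rewrite natrM -natr1; field; rewrite w_neq0 c_neq0.
  rewrite leq_bnd // /gfun ler_pM2r ?invr_gt0 ?mulr_gt0 ?ltr0n // -natrM ler_nat.
  by rewrite addSn subn1.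
rewrite fits.
have -> : (if (bnd j + (rval k h).+1 <= bnd j.+1)%N then (rval k h).+1 else rval k h)
          = blen j.
  have := blen_bounds c h_gt0 j; rewrite /blen /rval.
  by case: ifP; move: (bnd j) (bnd j.+1) (c %/ h)%N => a b r; lia.
rewrite sumr_const_nat addKn addSn /blen subnKC ?(ltnW bnd_lt) // -/(blen j).
congr (_ :: blocks _ _ _); rewrite -mulr_natr -natr1.
by field; rewrite w_neq0 (natr_blen_neq0 R h_gt0 h_le_c).
Qed.

Lemma value_of_blocks_from fuel j i :
  (j <= w)%N -> (w - j <= fuel)%N -> (bnd j < i <= bnd w)%N ->
  value_of_blocks R w (blocks fuel (bnd j).+1 (j%:R / w%:R)) i = wt R c h i / w%:R.
Proof.
elim: fuel j => [|fuel IH] j j_le fuel_ge /andP[lo hi].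
  by move: lo hi; rewrite (_ : j = w) //; [lia | lia].
have j_lt_w : (j < w)%N.
  by rewrite ltn_neqAle j_le andbT; apply: contraTneq lo => ->; rewrite -leqNgt.
have bnd_lt := bnd_ltS h_gt0 h_le_c j.
rewrite blocks_at_bnd //=; case: ifP => [in_block|out_block].
  rewrite /wt (@block_ofP _ _ h_gt0 h_le_c j) ?mul1r ?invfM //.
  by move: in_block bnd_lt; rewrite /blen; move: (bnd j) (bnd j.+1) => a b; lia.
apply: IH => //; first by move: fuel_ge; lia.
by move: out_block bnd_lt hi; rewrite /blen lo /=; move: (bnd j) (bnd j.+1) => a b; lia.
Qed.

Lemma hider_wt x : (0 < x < n - 1)%N -> hider R n k h w x = wt R c h x / w%:R.
Proof.
move=> x_range; rewrite /hider ifT; last by move: x_range; lia.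
have w_lt : (w < n - 1)%N by move: bezout h_le_c; nia.
have := @value_of_blocks_from n 0 x; rewrite bnd0 mul0r subn0 (bnd_full h_gt0 bezout).
by apply; rewrite ?(leq_trans (ltnW w_lt) (leq_subr 1 n)) //; lia.
Qed.

End Hider.

Local Open Scope ring_scope.

Theorem lemma3p9 (R : realFieldType) (k n h w : nat)
  (hk : (2 <= k)%N) (hn : (2 ^ k < n)%N)
  (hcop : coprime (cval k) (n - 1))
  (hh : (0 < h)%N) (hw1 : (1 <= w)%N) (hw2 : (w <= n - 2)%N)
  (hhw : (h * (n - 1) = w * cval k + 1)%N)
  (hwmin : forall w' h' : nat, (1 <= w')%N -> (w' <= n - 2)%N -> (0 < h')%N ->
           (h' * (n - 1) = w' * cval k + 1)%N -> (w <= w')%N)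
  (u v l s : nat)
  (hdisj : [disjoint cyc_interval (n - 1) u l & cyc_interval (n - 1) v s])
  (hls : (l + s <= cval k)%N) :
  ysum (hider R n k h w) (cyc_interval (n - 1) u l)
    + ysum (hider R n k h w) (cyc_interval (n - 1) v s)
  <= ysum (hider R n k h w) (cyc_interval (n - 1) u (l + s + 1)).
Proof.
have pow_ge4 : (2 ^ 2 <= 2 ^ k)%N by rewrite leq_exp2l.
have c_lt : (cval k + 2 < n)%N by rewrite /cval; lia.
have h_le_c : (h <= cval k)%N by move: hhw hw2 c_lt; nia.
have bezout : (w * cval k).+1 = (h * (n - 1))%N by rewrite hhw addn1.
have N_gt0 : (0 < n - 1)%N by lia.
have y0 : hider R n k h w 0 = 0 by [].
have y_wt := hider_wt R hh h_le_c hw1 bezout.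
rewrite !ysum_cyc_interval //; try lia.
rewrite -addnA window_cat lerD2l addn1.
apply: le_trans (window_le_mass hh h_le_c hw1 bezout y0 y_wt v _) _; first lia.
by apply: mass_le_window; last lia.
Qed.
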